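(* Let $G$ be a bounded-length, turn-based Dec-POMDP (as described in the context). For any temperature $T>0$ and any starting joint policy $\pi_0$, the off-belief learning (OBL) operator computes a unique policy $\pi_1$; that is, there is exactly one policy $\pi_1$ such that for every action-observation history $\tau^i$ of an acting player $i$ and every action $a$, $$\pi_1(a\mid\tau^i)=\frac{\exp\!\big(Q^{\pi_0\to\pi_1}(a\mid\tau^i)/T\big)}{\sum_{a'}\exp\!\big(Q^{\pi_0\to\pi_1}(a'\mid\tau^i)/T\big)}.$$
   Context: A Dec-POMDP $G$ has states $s$, actions $a$, per-player observation functions $\Omega^i(s)$, a transition function $\mathcal{T}$, and a common reward $R(s,a)$. It is turn-based: at each state only one player acts (the others have a null action); it has bounded length: a terminal state is reached after at most $t_{max}$ steps. A trajectory $\tau_t$ is the history of states and actions up to time $t$; the action-observation history (AOH) of player $i$ is $\tau^i_t=(\Omega^i(s_1),a_1,\dots,a_{t-1},\Omega^i(s_t))$. A policy $\pi^i(a\mid\tau^i)$ maps an AOH to a distribution over actions; a joint policy $\pi$ collects these. For a trajectory $\tau$, $V^{\pi}(\tau)$ denotes the expected (undiscounted) future return when all players play $\pi$ from $\tau$ onward. For a joint policy $\pi_0$ played by all agents, the belief is $\mathcal{B}_{\pi_0}(\tau\mid\tau^i)=P(\tau\mid\tau^i,\pi_0)$. The counterfactual Q-value is $$Q^{\pi_0\to\pi_1}(a\mid\tau^i_t)=\sum_{\tau_t}\mathcal{B}_{\pi_0}(\tau_t\mid\tau^i_t)\Big[R(s_t,a)+\sum_{\tau_{t+1}}\mathcal{T}(\tau_{t+1}\mid\tau_t,a)\,V^{\pi_1}(\tau_{t+1})\Big],$$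 the expected return of playing $a$ at $\tau^i_t$ assuming $\pi_0$ was played to reach $\tau^i_t$ and $\pi_1$ is played by all players afterward. The OBL operator maps $\pi_0$ to the policy $\pi_1$ defined by the softmax of $Q^{\pi_0\to\pi_1}$ with temperature $T$, as in the claim. *)

From HB Require Import structures.
From mathcomp Require Import all_boot all_order all_algebra.
From mathcomp Require Import reals sequences exp.
Set Implicit Arguments. Unset Strict Implicit. Unset Printing Implicit Defensive.
Import Order.TTheory GRing.Theory Num.Theory.
Local Open Scope ring_scope.

(* Transitions are Markov on states; the acting player at a
   state s is [actor s]; the other players play the null action, so a joint
   action is identified with the action of the acting player. *)
Record decpomdp (R : realType) (I S A O : finType) := DecPOMDP {
  init : S -> R;
  trans : S -> A -> S -> R;     (* trans s a s' = P(s' | s, a) *)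
  rew : S -> A -> R;
  obs : I -> S -> O;
  actor : S -> I;
  terminal : pred S;
  tmax : nat
}.

Section DecPOMDP.
Variables (R : realType) (I S A O : finType) (G : decpomdp R I S A O).

(* trajectory tau_t = (s_1,a_1,...,a_{t-1},s_t) as (history of (s_k,a_k), s_t) *)
Definition traj := (seq (S * A) * S)%type.
(* action-observation history (Omega^i(s_1),a_1,...,a_{t-1},Omega^i(s_t)) *)
Definition aohT := (seq (O * A) * O)%type.
(* joint policy: pi i tau^i a = pi^i(a | tau^i) *)
Definition policy := I -> aohT -> A -> R.

Definition aoh (i : I) (tau : traj) : aohT :=
  ([seq (obs G i p.1, p.2) | p <- tau.1], obs G i tau.2).

Definition is_dist (T : finType) (f : T -> R) :=
  (forall x, 0 <= f x) /\ \sum_(x : T) f x = 1.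

Definition is_policy (pi : policy) := forall i tau, is_dist (pi i tau).

Definition well_formed :=
  is_dist (init G) /\ forall s a, is_dist (trans G s a).

Definition first_state (tau : traj) : S :=
  match tau.1 with [::] => tau.2 | p :: _ => p.1 end.

(* Bounded length: along every trajectory that is possible under the dynamics
   (positive initial and transition probabilities), a terminal state is
   reached after at most tmax steps, i.e. a trajectory all of whose states are
   non-terminal has at most tmax states. *)
Fixpoint steps_ok (h : seq (S * A)) (s : S) : bool :=
  match h with
  | [::] => true
  | (s0, a0) :: h' =>
      [&& 0 < trans G s0 a0 (first_state (h', s)) & steps_ok h' s]
  end.
Definition feasible (tau : traj) :=
  (0 < init G (first_state tau)) && steps_ok tau.1 tau.2.
Definition bounded_length :=
  forall tau : traj, feasible tau ->
    all (fun p => ~~ terminal G p.1) tau.1 -> ~~ terminal G tau.2 ->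
    (size tau.1 < tmax G)%N.

(* P(tau | pi): probability of a trajectory when all players play pi.
   No action is taken from a terminal state. *)
Fixpoint prob_steps (pi : policy) (pre : seq (S * A)) (h : seq (S * A)) (s : S)
  : R :=
  match h with
  | [::] => 1
  | (s0, a0) :: h' =>
      (~~ terminal G s0)%:R * pi (actor G s0) (aoh (actor G s0) (pre, s0)) a0
      * trans G s0 a0 (first_state (h', s))
      * prob_steps pi (rcons pre (s0, a0)) h' s
  end.
Definition traj_prob (pi : policy) (tau : traj) : R :=
  init G (first_state tau) * prob_steps pi [::] tau.1 tau.2.

(* V^pi(tau): expected undiscounted future return when all players play pi
   from tau on; computed with [n] steps of lookahead (n = tmax suffices by
   bounded length). *)
Fixpoint value (n : nat) (pi : policy) (tau : traj) : R :=
  match n with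
  | 0 => 0
  | n'.+1 =>
      if terminal G tau.2 then 0 else
      \sum_(a : A) pi (actor G tau.2) (aoh (actor G tau.2) tau) a *
        (rew G tau.2 a +
         \sum_(s' : S) trans G tau.2 a s' * value n' pi (rcons tau.1 (tau.2, a), s'))
  end.
Definition V (pi : policy) (tau : traj) : R := value (tmax G) pi tau.

Definition consistent_weight (pi0 : policy) (i : I) (taui : aohT) (tau : traj) : R :=
  (aoh i tau == taui)%:R * traj_prob pi0 tau.

(* Belief B_{pi0}(tau | tau^i) = P(tau | tau^i, pi0), for trajectories tau of
   the same length as tau^i (all others have belief 0).  By the MathComp
   convention x / 0 = 0, the belief is identically 0 if tau^i has probability 0. *)
Definition belief (pi0 : policy) (i : I) (taui : aohT) (tau : traj) : R :=
  consistent_weight pi0 i taui tau /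
  \sum_(h : (size taui.1).-tuple (S * A)) \sum_(s : S)
     consistent_weight pi0 i taui (tval h, s).

Definition cfQ (pi0 pi1 : policy) (i : I) (taui : aohT) (a : A) : R :=
  \sum_(h : (size taui.1).-tuple (S * A)) \sum_(s : S)
    belief pi0 i taui (tval h, s) *
    (rew G s a + \sum_(s' : S) trans G s a s' * V pi1 (rcons (tval h) (s, a), s')).

Definition acting_aoh (i : I) (taui : aohT) :=
  exists tau : traj, aoh i tau = taui /\ actor G tau.2 = i /\ ~~ terminal G tau.2.

Definition obl_fixed (temp : R) (pi0 pi1 : policy) :=
  forall i taui, acting_aoh i taui -> forall a,
    pi1 i taui a =
      expR (cfQ pi0 pi1 i taui a / temp) /
      \sum_(a' : A) expR (cfQ pi0 pi1 i taui a' / temp).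

End DecPOMDP.

(* Backward induction on the length of the action-observation history.  The
   counterfactual value Q^{pi0 -> pi1}(a | tau^i) only looks at pi1 on
   histories strictly longer than tau^i, and it vanishes once tau^i is longer
   than tmax, because no trajectory of that length has positive probability.
   Hence the softmax equations determine pi1 one length at a time, from tmax
   downwards, and tmax + 2 iterations of the OBL operator from any policy
   reach the unique fixed point. *)
From HB Require Import structures.
From mathcomp Require Import all_boot all_order all_algebra.
From mathcomp Require Import reals sequences exp.
From mathcomp Require Import zify.
Set Implicit Arguments. Unset Strict Implicit. Unset Printing Implicit Defensive.
Import Order.TTheory GRing.Theory Num.Theory.
Local Open Scope ring_scope.

Section BackwardInduction.
Variables (T B : Type) (depth : T -> nat) (D : T -> Prop) (N : nat).
Variable F : (T -> B) -> T -> B.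

Hypothesis F_deep : forall p q x, (N < depth x)%N -> F p x = F q x.
Hypothesis F_local : forall p q x,
  (forall y, D y -> (depth x < depth y)%N -> p y = q y) -> F p x = F q x.

Lemma iter_stable (p0 : T -> B) k x :
  (N < depth x + k)%N -> iter k.+2 F p0 x = iter k.+1 F p0 x.
Proof.
elim: k x => [|k IH] x hx; first by apply: F_deep; rewrite addn0 in hx.
by apply: F_local => y _ hy; apply: IH; lia.
Qed.

Lemma exists_fixpoint (p0 : T -> B) : exists p, forall x, p x = F p x.
Proof.
exists (iter N.+2 F p0) => x.
by rewrite -iterS; symmetry; apply: iter_stable; lia.
Qed.

Lemma fixpoints_agree p q :
  (forall x, D x -> p x = F p x) -> (forall x, D x -> q x = F q x) ->
  forall x, D x -> p x = q x.
Proof.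
move=> fix_p fix_q.
suff agree k x : D x -> (N < depth x + k)%N -> p x = q x.
  by move=> x Dx; apply: (agree N.+1) => //; lia.
elim: k x => [|k IH] x Dx hx; rewrite fix_p // fix_q //.
  by apply: F_deep; rewrite addn0 in hx.
by apply: F_local => y Dy hy; apply: IH => //; lia.
Qed.

End BackwardInduction.

Section Softmax.
Variables (R : realType) (A : finType).

Definition softmax (temp : R) (f : A -> R) (a : A) : R :=
  expR (f a / temp) / \sum_(a' : A) expR (f a' / temp).

Lemma eq_softmax temp (f g : A -> R) a :
  f =1 g -> softmax temp f a = softmax temp g a.
Proof. by move=> fg; rewrite /softmax fg; under eq_bigr do rewrite fg. Qed.

Lemma softmax_dist temp (f : A -> R) : (0 < #|A|)%N -> is_dist (softmax temp f).
Proof.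
case/card_gt0P => a0 _.
have sum_gt0 : 0 < \sum_(a : A) expR (f a / temp).
  rewrite (bigD1 a0) //= ltr_pwDl ?expR_gt0 //.
  by apply: sumr_ge0 => a _; exact: expR_ge0.
split=> [a|]; first by rewrite divr_ge0 ?expR_ge0 ?ltW.
by rewrite -mulr_suml divff // lt0r_neq0.
Qed.

End Softmax.

Section Trajectories.
Variables (R : realType) (I S A O : finType) (G : decpomdp R I S A O).

Lemma first_state_rcons (h : seq (S * A)) (p : S * A) (s : S) :
  first_state (rcons h p, s) = first_state (h, p.1).
Proof. by case: h. Qed.

Lemma prob_steps_rcons pi h s1 a1 s pre :
  prob_steps G pi pre (rcons h (s1, a1)) s =
  prob_steps G pi pre h s1 * ((~~ terminal G s1)%:R *
     pi (actor G s1) (aoh G (actor G s1) (pre ++ h, s1)) a1 * trans G s1 a1 s).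
Proof.
elim: h pre => [|[s0 a0] h IH] pre /=; first by rewrite cats0 mulr1 mul1r.
by rewrite IH first_state_rcons /= cat_rcons !mulrA.
Qed.

Lemma prob_steps_neq0 pi (h : seq (S * A)) s pre :
  (forall s a s', 0 <= trans G s a s') ->
  prob_steps G pi pre h s != 0 ->
  steps_ok G h s && all (fun p => ~~ terminal G p.1) h.
Proof.
move=> trans_ge0; elim: h pre => [|[s0 a0] h IH] pre //=.
rewrite !mulf_eq0 !negb_or => /andP[/andP[/andP[nterm _] trans_neq0] rest].
rewrite pnatr_eq0 eqb0 negbK in nterm.
by rewrite lt_def trans_neq0 trans_ge0 nterm /=; exact: IH rest.
Qed.

Lemma traj_prob_beyond_tmax pi (h : seq (S * A)) s :
  well_formed G -> bounded_length G -> (tmax G < size h)%N ->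
  traj_prob G pi (h, s) = 0.
Proof.
move=> [[init_ge0 _] trans_dist] bounded; case/lastP: h => [|h [s1 a1]] //.
rewrite size_rcons => long; apply/eqP; apply: contraTT long => /negPf.
rewrite /traj_prob prob_steps_rcons first_state_rcons /= !mulf_eq0.
case/norP=> init_neq0 /norP[steps_neq0 /norP[/norP[nterm _] _]].
have trans_ge0 s' a s'' : 0 <= trans G s' a s'' by exact: (trans_dist s' a).1.
have /andP[ok nterms] := prob_steps_neq0 trans_ge0 steps_neq0.
have feas : feasible G (h, s1).
  by rewrite /feasible ok andbT lt_def init_neq0 init_ge0.
rewrite pnatr_eq0 eqb0 negbK in nterm.
by rewrite -leqNgt; exact: bounded feas nterms nterm.
Qed.

Lemma cfQ_beyond_tmax pi0 pi1 i (taui : aohT A O) a :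
  well_formed G -> bounded_length G -> (tmax G < size taui.1)%N ->
  cfQ G pi0 pi1 i taui a = 0.
Proof.
move=> wf bounded long; apply: big1 => h _; apply: big1 => s _.
rewrite /belief /consistent_weight traj_prob_beyond_tmax ?size_tuple //.
by rewrite !mulr0 !mul0r.
Qed.

Lemma value_agree m (p q : policy R I A O) :
  (forall j y a, acting_aoh G j y -> (m <= size y.1)%N -> p j y a = q j y a) ->
  forall n (tau : traj S A), (m <= size tau.1)%N ->
  value G n p tau = value G n q tau.
Proof.
move=> agree; elim=> [|n IH] tau long //=.
case nterm: (terminal G tau.2) => //.
apply: eq_bigr => a _; rewrite agree; last by rewrite size_map.
  congr (_ * (_ + _)); apply: eq_bigr => s' _.
  by rewrite IH // size_rcons; lia.
by exists tau; rewrite nterm.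
Qed.

Lemma cfQ_agree pi0 (p q : policy R I A O) i (taui : aohT A O) a :
  (forall j y b, acting_aoh G j y -> (size taui.1 < size y.1)%N ->
     p j y b = q j y b) ->
  cfQ G pi0 p i taui a = cfQ G pi0 q i taui a.
Proof.
move=> agree; apply: eq_bigr => h _; apply: eq_bigr => s _.
congr (_ * (_ + _)); apply: eq_bigr => s' _.
by rewrite /V (value_agree agree) // size_rcons size_tuple.
Qed.

End Trajectories.

Theorem theorem1 (R : realType) (I S A O : finType) (G : decpomdp R I S A O) :
  well_formed G -> bounded_length G -> (0 < #|A|)%N ->
  forall (temp : R), 0 < temp ->
  forall pi0 : policy R I A O, is_policy pi0 ->
  exists pi1 : policy R I A O,
    [/\ is_policy pi1, obl_fixed G temp pi0 pi1 &
        forall pi2 : policy R I A O, is_policy pi2 -> obl_fixed G temp pi0 pi2 ->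
          forall i taui, acting_aoh G i taui -> forall a, pi2 i taui a = pi1 i taui a].
Proof.
move=> wf bounded A_gt0 temp _ pi0 _.
pose depth (t : I * aohT A O * A) := size t.1.2.1.
pose acting (t : I * aohT A O * A) := acting_aoh G t.1.1 t.1.2.
pose F (u : I * aohT A O * A -> R) t :=
  softmax temp (cfQ G pi0 (fun i x a => u (i, x, a)) t.1.1 t.1.2) t.2.
have F_deep u v t : (tmax G < depth t)%N -> F u t = F v t.
  by move=> long; apply: eq_softmax => b; rewrite !cfQ_beyond_tmax.
have F_local u v t :
    (forall t', acting t' -> (depth t < depth t')%N -> u t' = v t') ->
    F u t = F v t.
  move=> agree; apply: eq_softmax => b.
  by apply: cfQ_agree => j y b' ac long; exact: agree (j, y, b') ac long.
have [u u_fix] := exists_fixpoint F_deep F_local (fun _ => 0).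
pose pi1 i x a := u (i, x, a).
exists pi1; split.
- move=> i x; have [ge0 sum1] := softmax_dist temp (cfQ G pi0 pi1 i x) A_gt0.
  rewrite /pi1; split=> [a|]; first by rewrite u_fix; exact: ge0.
  by under eq_bigr do rewrite u_fix.
- by move=> i x _ a; exact: u_fix (i, x, a).
move=> pi2 _ fix2 i x ac a.
pose u2 t := pi2 t.1.1 t.1.2 t.2.
suff agree : forall t, acting t -> u2 t = u t by exact: agree (i, x, a) ac.
apply: (fixpoints_agree F_deep F_local) => [[[j y] b] ac'|t _]; last exact: u_fix.
exact: fix2 j y ac' b.
Qed.
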